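(* Let $X$ be any topological space and let $Y$ be a topological space such that $\hat{c}(Y^\omega) > \pi w(Y) \geq \pi w(X)$. Then for every cardinal $\mu$ with $\omega \leq \mu \leq \pi w(X)$, the product space $X \times Y^\mu$ (with the Tychonoff product topology) has a $\sigma$-disjoint $\pi$-base.
   Context: All spaces are Hausdorff. A $\pi$-base for a space $Z$ is a family $\mathcal{P}$ of non-empty open subsets of $Z$ such that every non-empty open $U \subseteq Z$ contains some $P \in \mathcal{P}$; $\pi w(Z)$ is the minimum cardinality of a $\pi$-base of $Z$. A $\pi$-base is $\sigma$-disjoint if it is a countable union of families each consisting of pairwise disjoint sets. A cellular family in $Z$ is a family of pairwise disjoint non-empty open subsets of $Z$. $\hat{c}(Z)$ denotes the least cardinal $\kappa$ such that $Z$ has no cellular family of cardinality $\kappa$. *)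

From HB Require Import structures.
From mathcomp Require Import all_boot all_order all_algebra.
From mathcomp Require Import all_classical all_reals all_analysis.
Set Implicit Arguments. Unset Strict Implicit. Unset Printing Implicit Defensive.
Local Open Scope classical_set_scope.
Local Open Scope card_scope.

(* Cardinals are represented by sets (of some type); comparisons use the
   library's [#<=] (injection exists) and [#=] (bijection exists). *)

Definition pi_base (Z : topologicalType) (P : set (set Z)) : Prop :=
  (forall A, P A -> open A /\ A !=set0) /\
  (forall U, open U -> U !=set0 -> exists2 A, P A & A `<=` U).

Definition pairwise_disjoint (Z : Type) (F : set (set Z)) : Prop :=
  forall A B, F A -> F B -> A <> B -> A `&` B = set0.

Definition cellular (Z : topologicalType) (C : set (set Z)) : Prop :=
  (forall A, C A -> open A /\ A !=set0) /\ pairwise_disjoint C.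

Definition sigma_disjoint_pi_base (Z : topologicalType) (P : set (set Z)) : Prop :=
  pi_base P /\
  exists F : nat -> set (set Z),
    P = \bigcup_n F n /\ forall n, pairwise_disjoint (F n).

Definition min_pi_base (Z : topologicalType) (P : set (set Z)) : Prop :=
  pi_base P /\ forall P' : set (set Z), pi_base P' -> P #<= P'.

Definition piw_le (X Y : topologicalType) : Prop :=
  forall PY : set (set Y), pi_base PY ->
    exists PX : set (set X), pi_base PX /\ PX #<= PY.

Definition card_le_piw (U : Type) (K : set U) (Z : topologicalType) : Prop :=
  forall P : set (set Z), pi_base P -> K #<= P.

(* "chat(Z) > #K": since chat(Z) is the least cardinal kappa such that Z has
   no cellular family of cardinality kappa, chat(Z) > #K iff every cardinal
   <= #K (i.e. the cardinality of some subset of K) is the cardinality of a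
   cellular family of Z. *)
Definition chat_gt (Z : topologicalType) (U : Type) (K : set U) : Prop :=
  forall L, L `<=` K -> exists C : set (set Z), cellular C /\ C #= L.

From HB Require Import structures.
From mathcomp Require Import all_boot all_order all_algebra.
From mathcomp Require Import all_classical all_reals all_analysis.
Local Open Scope classical_set_scope.
Local Open Scope card_scope.

(* Take a cellular family C of Y^omega with |C| = piw(Y) >= piw(X) >= mu, and
   split countably many coordinates of Y^mu into disjoint blocks (slots), each a
   copy of omega.  Every non-empty open subset of X x Y^mu contains a set
   B x {z | z(m_l) in W_l for l < k} with B, W_l from pi-bases of X and Y.  The
   n-th layer consists of such sets cut down further by asking that z, restricted
   to the slots of index n, lies in cells of C coding B, k, the m_l and the W_l.
   Two members of one layer that meet carry the same codes, hence coincide, and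
   every open set contains a member of the layer whose slots avoid the finitely
   many coordinates m_l. *)

Lemma card_leT_injective (T U : Type) :
  [set: T] #<= [set: U] -> exists f : T -> U, injective f.
Proof.
move=> /card_leP[g]; exists (fun t => val (g (SigSub (@mem_set _ [set: T] t I)))).
move=> t t' /val_inj /(@inj _ _ _ g); rewrite !inE => /(_ I I).
by move=> /(congr1 val).
Qed.

Lemma cellular_eq {Z : topologicalType} {C : set (set Z)} {U V : set Z} {z : Z} :
  cellular C -> C U -> C V -> U z -> V z -> U = V.
Proof.
move=> [_ disjC] CU CV Uz Vz; apply: contrapT => /(disjC _ _ CU CV).
by move/seteqP => [/(_ z (conj Uz Vz))].
Qed.

Lemma exists_glued {A I V : Type} {e : A -> I} (g : A -> V) (z0 : I -> V) :
  injective e ->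
  exists z : I -> V, (forall a, z (e a) = g a) /\ (forall i, ~ range e i -> z i = z0 i).
Proof.
move=> e_inj; exists (fun i => if pselect (range e i) is left r
  then g (projT1 (cid2 r)) else z0 i); split => [a|i ni].
- case: pselect => [r|]; last by case; exists a.
  by case: (cid2 r) => a' _ /= /e_inj ->.
- by case: pselect.
Qed.

Lemma finite_avoids_disjoint {T : finType} {I : Type} (blk : nat -> set I) (x : T -> I) :
  (forall n n' i, blk n i -> blk n' i -> n = n') -> exists a, forall t, ~ blk a (x t).
Proof.
move=> blk_disj.
have [a aP] : {a : T -> nat & forall t n, (a t <= n)%N -> ~ blk n (x t)}.
  apply: (@choice _ _ (fun t a => forall n, (a <= n)%N -> ~ blk n (x t))) => t.
  case: (pselect (exists n, blk n (x t))) => [[n0 bn0]|nob].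
  - exists n0.+1 => n n0n /(blk_disj _ _ _ bn0) e.
    by rewrite e ltnn in n0n.
  - by exists 0%N => n _ bn; apply: nob; exists n.
by exists (\max_t a t) => t; apply: aP; exact: leq_bigmax.
Qed.

Lemma forall_ord_cat {T : Type} (P : T -> Prop) (k1 k2 : nat)
    (f1 : 'I_k1 -> T) (f2 : 'I_k2 -> T) :
  (forall l, P (match fintype.split l with inl l1 => f1 l1 | inr l2 => f2 l2 end)) <->
  (forall l, P (f1 l)) /\ (forall l, P (f2 l)).
Proof.
split=> [H|[H1 H2] l]; last by case: fintype.split.
by split=> l; [have := H (unsplit (inl l)) | have := H (unsplit (inr l))];
  rewrite unsplitK.
Qed.

Lemma openX (X Z : topologicalType) (A : set X) (B : set Z) :
  open A -> open B -> open (A `*` B).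
Proof.
rewrite !openE => oA oB [x z] [/= Ax Bz].
by exists (A, B) => //; split; [exact: oA | exact: oB].
Qed.

Lemma open_forall (T : topologicalType) (I : finType) (Q : I -> set T) :
  (forall i, open (Q i)) -> open [set z | forall i, Q i z].
Proof.
move=> oQ; rewrite openE => z Qz; apply: filter_forall => i.
by apply: open_nbhs_nbhs; split; [exact: oQ | exact: Qz].
Qed.

Section PointwiseTopology.
Context {I : Type} {Y : topologicalType}.

Lemma coord_continuous (i : I) : continuous (fun z : {ptws I -> Y} => z i).
Proof.
apply/continuousP => O oO; rewrite openE => z Oz.
have := (@cvg_sup _ I (fun i => Topological.class (initial_topology (fun w : I -> Y => w i)))
  (nbhs z) z _).1 (@cvg_id _ (nbhs z)) i.
apply; apply: (@open_nbhs_nbhs (initial_topology (fun w : I -> Y => w i))).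
by split => //; exists O.
Qed.

Lemma restrict_continuous (J : Type) (phi : J -> I) :
  continuous (fun z : {ptws I -> Y} => (z \o phi : {ptws J -> Y})).
Proof.
move=> z; apply: (@cvg_sup _ _
  (fun j => Topological.class (initial_topology (fun w : J -> Y => w j))) _ _
  (fmap_filter _ (nbhs_filter z))).2 => j A.
rewrite nbhsE => -[B [[V oV <-] Vz] BA].
apply: (filterS BA); apply: (coord_continuous (phi j)).
exact: open_nbhs_nbhs.
Qed.

Definition box {k : nat} (f : 'I_k -> I * set Y) : set {ptws I -> Y} :=
  [set z | forall l, (f l).2 (z (f l).1)].

Lemma open_box (k : nat) (f : 'I_k -> I * set Y) :
  (forall l, open (f l).2) -> open (box f).
Proof.
move=> oY; apply: open_forall => l.
exact: (continuousP _).1 (coord_continuous _) _ (oY l).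
Qed.

Lemma nbhs_box (y : {ptws I -> Y}) (A : set {ptws I -> Y}) : nbhs y A ->
  exists k (f : 'I_k -> I * set Y),
    (forall l, open (f l).2 /\ (f l).2 (y (f l).1)) /\ box f `<=` A.
Proof.
pose G := [set A : set {ptws I -> Y} | exists k (f : 'I_k -> I * set Y),
  (forall l, open (f l).2 /\ (f l).2 (y (f l).1)) /\ box f `<=` A].
have FG : Filter G.
  constructor.
  - exists 0%N, (fun l : 'I_0 => False_rect _ (notF (ltn_ord l))).
    by split=> [[]|].
  - move=> A1 A2 [k1 [f1 [oY1 f1A]]] [k2 [f2 [oY2 f2A]]].
    exists (k1 + k2)%N,
      (fun l => match fintype.split l with inl l1 => f1 l1 | inr l2 => f2 l2 end).
    split; first exact/(forall_ord_cat (fun p : I * set Y => open p.2 /\ p.2 (y p.1))).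
    move=> z /(forall_ord_cat (fun p : I * set Y => p.2 (z p.1))) [z1 z2].
    by split; [exact: f1A | exact: f2A].
  - by move=> A1 A2 A12 [k [f [oY fA]]]; exists k, f; split=> // z /fA /A12.
move: A; apply: (@cvg_sup _ I
  (fun i => Topological.class (initial_topology (fun w : I -> Y => w i))) G y FG).2.
move=> i A; rewrite nbhsE => -[B [[V oV <-] Vy] BA].
exists 1%N, (fun=> (i, V)); split=> [l //|z zV]; apply: BA; exact: (zV ord0).
Qed.

Lemma nbhs_pi_box {PY : set (set Y)} {y : {ptws I -> Y}} {A : set {ptws I -> Y}} :
  pi_base PY -> nbhs y A ->
  exists k (f : 'I_k -> I * set Y) z, [/\ forall l, PY (f l).2, box f z & box f `<=` A].
Proof.
move=> piY /nbhs_box [k [g [gY gA]]].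
pose O i := [set v : Y | forall l, (g l).1 = i -> (g l).2 v].
have oO i : open (O i).
  apply: open_forall => l; case: (pselect ((g l).1 = i)) => [gi|ngi].
  - suff -> : (fun v => (g l).1 = i -> (g l).2 v) = (g l).2 by exact: (gY l).1.
    by apply/funext => v; apply/propext; split=> [/(_ gi) | ? _].
  - suff -> : (fun v => (g l).1 = i -> (g l).2 v) = setT by exact: openT.
    by apply/funext => v; apply/propext; split=> // _ /ngi.
have [W WP] : {W : I -> set Y & forall i, PY (W i) /\ W i `<=` O i}.
  apply: (@choice _ _ (fun i W => PY W /\ W `<=` O i)) => i.
  have Oy : O i (y i) by move=> l <-; exact: (gY l).2.
  have [W PW WO] := piY.2 _ (oO i) (ex_intro _ _ Oy).
  by exists W.
have [z zW] : {z : I -> Y & forall i, W i (z i)}.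
  by apply: (@choice _ _ (fun i v => W i v)) => i; exact: (piY.1 _ (WP i).1).2.
exists k, (fun l => ((g l).1, W (g l).1)), z; split=> [l|l|w wW]; first exact: (WP _).1.
- exact: zW.
- by apply: gA => l; exact: (WP _).2 _ (wW l) l erefl.
Qed.

End PointwiseTopology.

Section Encoding.
Context {X Y : topologicalType} {M : Type}.
Context {PX : set (set X)} {PY : set (set Y)} {C : set (set {ptws nat -> Y})}.
Hypotheses (piX : pi_base PX) (piY : pi_base PY) (cellC : cellular C).
Context {h : nat -> M}.
Hypothesis h_inj : injective h.
Context {codeX : set X -> set {ptws nat -> Y}} {codeM : M -> set {ptws nat -> Y}}
  {codeY : set Y -> set {ptws nat -> Y}}.
Hypotheses (codeX_C : set_fun PX C codeX) (codeX_inj : set_inj PX codeX).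
Hypotheses (codeM_C : set_fun [set: M] C codeM) (codeM_inj : set_inj [set: M] codeM).
Hypotheses (codeY_C : set_fun PY C codeY) (codeY_inj : set_inj PY codeY).

Definition slot (n j l k : nat) : M := h (pickle (n, j, l, k)).

Lemma slot_inj n j l k n' j' l' k' :
  slot n j l k = slot n' j' l' k' -> (n, j, l, k) = (n', j', l', k').
Proof. by move=> /h_inj /(pcan_inj pickleK). Qed.

Definition cylinder (n j l : nat) (S : set {ptws nat -> Y}) : set {ptws M -> Y} :=
  [set z : M -> Y | S (z \o slot n j l)].

Lemma open_cylinder n j l S : C S -> open (cylinder n j l S).
Proof.
move=> CS; apply: (continuousP _).1 (@restrict_continuous M Y nat (slot n j l)) _ _.
exact: (cellC.1 _ CS).1.
Qed.

(* Slot (n, 0, 0) codes B, slot (n, 1, 0) the length k, and slots (n, 2, l) and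
   (n, 3, l) the coordinate and the open set of the l-th entry of f. *)
Definition coded (n : nat) (B : set X) {k : nat} (f : 'I_k -> M * set Y) :=
  cylinder n 0 0 (codeX B) `&` cylinder n 1 0 (codeM (h k)) `&`
  [set z | forall l : 'I_k,
    (cylinder n 2 l (codeM (f l).1) `&` cylinder n 3 l (codeY (f l).2)) z].

Lemma open_coded n B k f : PX B -> (forall l, PY (f l).2) -> open (@coded n B k f).
Proof.
move=> PB Pf; apply: openI; first by apply: openI; apply: open_cylinder;
  [exact: codeX_C | exact: codeM_C].
by apply: open_forall => l; apply: openI; apply: open_cylinder;
  [exact: codeM_C | exact: codeY_C].
Qed.

Definition basic (n : nat) (B : set X) {k : nat} (f : 'I_k -> M * set Y) :
    set (X * {ptws M -> Y}) :=
  B `*` (coded n B f `&` box f).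

Lemma open_basic n B k (f : 'I_k -> M * set Y) :
  PX B -> (forall l, PY (f l).2) -> open (basic n B f).
Proof.
move=> PB Pf; apply: openX; first exact: (piX.1 _ PB).1.
apply: openI; first exact: open_coded.
by apply: open_box => l; exact: (piY.1 _ (Pf l)).1.
Qed.

Lemma basic_eq_of_coded n B B' k k' (f : 'I_k -> M * set Y) (f' : 'I_k' -> M * set Y) z :
  PX B -> PX B' -> (forall l, PY (f l).2) -> (forall l, PY (f' l).2) ->
  coded n B f z -> coded n B' f' z -> basic n B f = basic n B' f'.
Proof.
move=> PB PB' Pf Pf' [[zB zk] zf] [[zB' zk'] zf'].
have eB : B = B'.
  apply: codeX_inj; rewrite ?inE //.
  exact: cellular_eq cellC (codeX_C _ PB) (codeX_C _ PB') zB zB'.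
have ek : k = k'.
  apply: h_inj; apply: codeM_inj; rewrite ?inE //.
  exact: cellular_eq cellC (codeM_C _ I) (codeM_C _ I) zk zk'.
subst B' k'; suff -> : f = f' by [].
apply/funext => l; have [[zl1 zl2] [zl1' zl2']] := (zf l, zf' l).
rewrite [f l]surjective_pairing [f' l]surjective_pairing; congr pair.
- apply: codeM_inj; rewrite ?inE //.
  exact: cellular_eq cellC (codeM_C _ I) (codeM_C _ I) zl1 zl1'.
- apply: codeY_inj; rewrite ?inE //.
  exact: cellular_eq cellC (codeY_C _ (Pf l)) (codeY_C _ (Pf' l)) zl2 zl2'.
Qed.

Lemma exists_coded n B {k} (f : 'I_k -> M * set Y) (z0 : M -> Y) :
  PX B -> (forall l, PY (f l).2) ->
  exists2 z, coded n B f z & forall i, (forall j l k', i <> slot n j l k') -> z i = z0 i.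
Proof.
move=> PB Pf.
(* Slots that [coded] does not constrain get the junk target [setT]. *)
pose target (jl : nat * nat) : set {ptws nat -> Y} := match jl with
  | (0, _) => codeX B
  | (1, _) => codeM (h k)
  | (2, l) => if insub l is Some l' then codeM (f l').1 else setT
  | (_, l) => if insub l is Some l' then codeY (f l').2 else setT
  end.
have cell_ne S : C S -> S !=set0 by move=> /(cellC.1 S) [].
have target_ne jl : target jl !=set0.
  case: jl => -[|[|[|j]]] l /=; try case: insub => [l'|];
    first [by exists (fun=> z0 (h 0)) | apply: cell_ne];
    first [exact: codeX_C | exact: codeM_C | exact: codeY_C].
have [G GP] := @choice _ _ (fun jl w => target jl w) target_ne.
have e_inj : injective (fun a : nat * nat * nat => slot n a.1.1 a.1.2 a.2).
  by move=> [[j l] k1] [[j' l'] k1'] /slot_inj [-> -> ->].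
have [z [zG zz0]] := exists_glued (fun a => G (a.1.1, a.1.2) a.2) z0 e_inj.
have zP j l : target (j, l) (z \o slot n j l).
  by rewrite (_ : z \o _ = G (j, l)) ?GP //; apply/funext => k1; exact: (zG (j, l, k1)).
exists z.
- split; first split; [exact: (zP 0 0) | exact: (zP 1 0) | move=> l].
  by split; [have := zP 2 l | have := zP 3 l]; rewrite /= valK.
- move=> i ni; apply: zz0 => -[[[j l] k1] _ e]; exact: ni j l k1 (esym e).
Qed.

Definition layer (n : nat) : set (set (X * {ptws M -> Y})) :=
  [set A | exists B k (f : 'I_k -> M * set Y),
    [/\ PX B, forall l, PY (f l).2, A = basic n B f & A !=set0]].

Lemma layer_disjoint n : pairwise_disjoint (layer n).
Proof.
move=> A A' [B [k [f [PB Pf -> _]]]] [B' [k' [f' [PB' Pf' -> _]]]] AA'.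
apply/seteqP; split=> // -[x z] [[_ [zc _]] [_ [zc' _]]]; apply: AA'.
exact: basic_eq_of_coded zc zc'.
Qed.

Lemma layers_cover U : open U -> U !=set0 ->
  exists2 A, (\bigcup_n layer n) A & A `<=` U.
Proof.
move=> oU [[x y] Uxy].
have [[A1 A2] /= [A1x A2y] A12U] : nbhs (x, y) U by rewrite openE in oU; exact: oU.
have [B PB BA1] := piX.2 _ (@open_interior _ A1) (ex_intro _ x A1x).
have [k [f [z0 [Pf z0f fA2]]]] := nbhs_pi_box piY A2y.
have [a avoid] : exists a, forall l, ~ exists j l' k1, (f l).1 = slot a j l' k1.
  apply: (finite_avoids_disjoint (fun n i => exists j l k1, i = slot n j l k1)).
  move=> n n' i [j [l [k1 ->]]] [j' [l' [k1']]].
  by move=> /slot_inj [].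
have [z zc zz0] := exists_coded a B f z0 PB Pf.
have [xB Bx] := (piX.1 _ PB).2.
exists (basic a B f).
- exists a => //; exists B, k, f; split=> //; exists (xB, z); split=> //; split=> // l.
  rewrite /= zz0; first exact: z0f.
  by move=> j l' k1 e; apply: (avoid l); exists j, l', k1.
- move=> [x' z'] [Bx' [_ z'f]]; apply: A12U; split; last exact: fA2.
  exact: interior_subset (BA1 _ Bx').
Qed.

Lemma sigma_disjoint_pi_base_layers : sigma_disjoint_pi_base (\bigcup_n layer n).
Proof.
split; first split.
- by move=> A [n _ [B [k [f [PB Pf -> ne]]]]]; split=> //; exact: open_basic.
- exact: layers_cover.
- by exists layer; split=> // n; exact: layer_disjoint.
Qed.

End Encoding.

Theorem ptws_sigma_disjoint_pi_base {X Y : topologicalType} {M : Type}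
    {PX : set (set X)} {PY : set (set Y)} {C : set (set {ptws nat -> Y})} :
  pi_base PX -> pi_base PY -> cellular C ->
  [set: nat] #<= [set: M] -> [set: M] #<= C -> PX #<= C -> PY #<= C ->
  exists P : set (set (X * {ptws M -> Y})), sigma_disjoint_pi_base P.
Proof.
move=> piX piY cellC /card_leT_injective [h h_inj].
move=> /pcard_leP/injfunPex [cM cMC cM_inj] /pcard_leP/injfunPex [cX cXC cX_inj].
move=> /pcard_leP/injfunPex [cY cYC cY_inj].
eexists; exact: (sigma_disjoint_pi_base_layers piX piY cellC h_inj
  cXC cX_inj cMC cM_inj cYC cY_inj).
Qed.

Theorem lemma2 (X Y : topologicalType) (M : Type)
  (hX : hausdorff_space X) (hY : hausdorff_space Y)
  (* chat(Y^omega) > piw(Y) *)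
  (hc : exists PY : set (set Y), min_pi_base PY /\ chat_gt {ptws nat -> Y} PY)
  (* piw(Y) >= piw(X) *)
  (hXY : piw_le X Y)
  (* omega <= mu *)
  (homega : [set: nat] #<= [set: M])
  (* mu <= piw(X) *)
  (hmu : card_le_piw [set: M] X) :
  exists P : set (set (X * {ptws M -> Y})), sigma_disjoint_pi_base P.
Proof.
have [PY [[piY _] chatY]] := hc.
have [PX [piX PXY]] := hXY PY piY.
have [C [cellC /card_eqPle [_ PYC]]] := chatY PY (@subset_refl _ PY).
have PXC := card_le_trans PXY PYC.
apply: (ptws_sigma_disjoint_pi_base piX piY cellC homega _ PXC PYC).
exact: card_le_trans (hmu PX piX) PXC.
Qed.
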